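(* Let $X$ be a unital prime Banach algebra containing a nontrivial idempotent element. Let $h:X\to X$ be an odd mapping and $\phi,\psi:X^2\to[0,\infty)$ satisfy $$\|h(xyx)-h(x)yx-xh(y)x-xyh(x)\|\le\psi(x,y),$$ $$\|h(x+my)+h(x-my)-2h(x)+2m^2h(y)-m^2h(2y)\|\le\phi(x,y)$$ for all $x,y\in X$, for some fixed nonzero even integer $m$. Assume that for all $x,y\in X$ $$\Phi(x):=\sum_{k=0}^{\infty}2^{-k}\phi(0,2^kx)<\infty,\qquad \liminf_{k\to\infty}2^{-3k}\psi(2^kx,2^ky)=0,\qquad \liminf_{k\to\infty}2^{-2k}\psi(2^kx,y)=0.$$ Then $h$ is a derivation.
   Context: An algebra $X$ is prime if it is nontrivial and for any $a,b\in X$, $arb=0$ for all $r\in X$ implies $a=0$ or $b=0$. A nontrivial idempotent is an element $e$ with $e^2=e$, $e\neq0$, $e\neq\mathbf{1}$. A derivation is an additive map $D:X\to X$ with $D(xy)=D(x)y+xD(y)$ for all $x,y\in X$. *)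

From HB Require Import structures.
From mathcomp Require Import all_boot all_order all_algebra.
From mathcomp Require Import all_classical all_reals all_analysis.
Set Implicit Arguments. Unset Strict Implicit. Unset Printing Implicit Defensive.
Import Order.TTheory GRing.Theory Num.Theory.
Import numFieldNormedType.Exports.
Local Open Scope ring_scope.

(* A unital Banach algebra structure on a (real) Banach space X:
   an associative, bilinear, unital multiplication with submultiplicative norm.
   (HB cannot join the ring hierarchy with the normed-module hierarchy here,
   so the multiplication is packaged as a record over X.) *)
Record banach_alg (R : realType) (X : completeNormedModType R) := BanachAlg {
  bmul : X -> X -> X;
  bone : X;
  bmulA : forall x y z, bmul x (bmul y z) = bmul (bmul x y) z;
  bmul1x : forall x, bmul bone x = x;
  bmulx1 : forall x, bmul x bone = x;
  bmulDl : forall x y z, bmul (x + y) z = bmul x z + bmul y z;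
  bmulDr : forall x y z, bmul x (y + z) = bmul x y + bmul x z;
  bmulZl : forall (a : R) x y, bmul (a *: x) y = a *: bmul x y;
  bmulZr : forall (a : R) x y, bmul x (a *: y) = a *: bmul x y;
  bnormM_le : forall x y, `|bmul x y| <= `|x| * `|y|
}.

Section Defs.
Variables (R : realType) (X : completeNormedModType R) (A : banach_alg X).
Local Notation "x ** y" := (bmul A x y) (at level 40, left associativity).

Definition prime_alg : Prop :=
  bone A != 0 /\
  forall a b : X, (forall r : X, a ** r ** b = 0) -> a = 0 \/ b = 0.

Definition has_nontrivial_idempotent : Prop :=
  exists e : X, e ** e = e /\ e != 0 /\ e != bone A.

Definition derivation (D : X -> X) : Prop :=
  (forall x y, D (x + y) = D x + D y) /\
  (forall x y, D (x ** y) = D x ** y + x ** D y).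
End Defs.

Definition odd_map (X : zmodType) (h : X -> X) : Prop :=
  forall x, h (- x) = - h x.

From HB Require Import structures.
From mathcomp Require Import all_boot all_order all_algebra.
From mathcomp Require Import all_classical all_reals all_analysis.
From mathcomp Require Import zify ring.
Import Order.TTheory GRing.Theory Num.Theory.
Import numFieldNormedType.Exports.
Local Open Scope classical_set_scope.
Local Open Scope ring_scope.
Set Implicit Arguments. Unset Strict Implicit. Unset Printing Implicit Defensive.

(* The dyadic averages 2^-n h(2^n x) form a Cauchy sequence: the case x = 0 of
   the second inequality, with h odd, bounds |h(2w) - 2h(w)| by phi(0,w), so
   consecutive averages differ by 2^-n phi(0, 2^n x), which is summable.  Their
   limit D satisfies the Jordan triple identity
     D(xyx) = D(x)yx + xD(y)x + xyD(x)
   exactly, because the rescaled defects of h have liminf 0.  Rescaling only x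
   gives the same identity with h(y) in the middle, and comparing the two at
   x = 1 yields h = D.  So h is a Jordan triple derivation, not assumed
   additive, of a 2-torsion-free prime ring with a nontrivial idempotent p.
   After subtracting a suitable inner derivation, d(p) = d(1 - p) = 0; then d
   commutes with the Peirce compressions x |-> p x q, primeness makes d
   additive and Leibniz on each pair of Peirce corners, and the Peirce
   decomposition assembles these into a derivation. *)

Section PeircePair.
Variable R : pzRingType.

Record peirce_pair (p q : R) : Prop := PeircePair {
  pair_pp : p * p = p; pair_qq : q * q = q; pair_pq : p * q = 0; pair_qp : q * p = 0;
  pair_add : p + q = 1; pair_p_neq0 : p != 0; pair_q_neq0 : q != 0 }.

Lemma peirce_pair_sym p q : peirce_pair p q -> peirce_pair q p.
Proof. by case=> *; split => //; rewrite addrC. Qed.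

Lemma peirce_pair_idem e : e * e = e -> e != 0 -> e != 1 -> peirce_pair e (1 - e).
Proof.
move=> ee e0 e1; split => //.
- by rewrite mulrBl mul1r mulrBr mulr1 ee subrr subr0.
- by rewrite mulrBr mulr1 ee subrr.
- by rewrite mulrBl mul1r ee subrr.
- by rewrite addrC subrK.
- by rewrite subr_eq0 eq_sym.
Qed.

Lemma pair_ppr p q (H : peirce_pair p q) y : y * p * p = y * p.
Proof. by rewrite -mulrA (pair_pp H). Qed.

Lemma pair_pqr p q (H : peirce_pair p q) y : y * p * q = 0.
Proof. by rewrite -mulrA (pair_pq H) mulr0. Qed.

Lemma peirce_decomp p q (H : peirce_pair p q) x :
  x = p * x * p + p * x * q + q * x * p + q * x * q.
Proof.
have -> : p * x * p + p * x * q + q * x * p + q * x * q = (p + q) * x * (p + q).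
  by rewrite mulrDl mulrDl !mulrDr addrA.
by rewrite (pair_add H) mul1r mulr1.
Qed.

End PeircePair.

Ltac peirce_simpl H := rewrite ?(mulrDl, mulrDr, mulrBl, mulrBr, mulrN, mulNr,
  mulr0, mul0r, mulr1, mul1r, mulrA, pair_pp H, pair_ppr H, pair_pq H, pair_pqr H,
  pair_pp (peirce_pair_sym H), pair_ppr (peirce_pair_sym H),
  pair_pq (peirce_pair_sym H), pair_pqr (peirce_pair_sym H),
  addr0, add0r, subr0, sub0r, oppr0, opprK).

Section Leibniz.
Variable R : pzRingType.
Implicit Types (D : R -> R) (c : R).

Definition leibniz D := forall x y, D (x * y) = D x * y + x * D y.

Definition triple_leibniz D :=
  forall x y, D (x * y * x) = D x * y * x + x * D y * x + x * y * D x.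

Definition ad c x := c * x - x * c.

Lemma leibniz_triple D : leibniz D -> triple_leibniz D.
Proof. by move=> DM x y; rewrite !DM mulrDl. Qed.

Lemma leibnizD D1 D2 : leibniz D1 -> leibniz D2 -> leibniz (D1 \+ D2).
Proof. by move=> D1M D2M x y /=; rewrite D1M D2M mulrDl mulrDr addrACA. Qed.

Lemma triple_leibnizB D1 D2 :
  triple_leibniz D1 -> triple_leibniz D2 -> triple_leibniz (D1 \- D2).
Proof.
move=> D1T D2T x y /=; rewrite D1T D2T !(mulrBl, mulrBr) !opprD.
by rewrite addrACA (addrACA (D1 x * y * x)).
Qed.

Lemma ad_additive c : {morph ad c : x y / x + y}.
Proof. by move=> x y; rewrite /ad mulrDr mulrDl opprD addrACA. Qed.

Lemma leibniz_ad c : leibniz (ad c).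
Proof.
move=> x y; rewrite /ad !(mulrBl, mulrBr) !mulrA.
by rewrite addrA subrK.
Qed.

End Leibniz.

Section TripleDerivation.
Variables (R : pzRingType) (d : R -> R).
Hypothesis two_torsion_free : forall x : R, x + x = 0 -> x = 0.
Hypothesis prime_ring : forall a b : R, (forall r, a * r * b = 0) -> a = 0 \/ b = 0.
Hypothesis dXYX : triple_leibniz d.

Lemma eq0_of_eq_add3 (x : R) : x = x + x + x -> x = 0.
Proof.
move=> x3; apply: two_torsion_free; apply/eqP.
by rewrite -(inj_eq (addrI x)) addr0 eq_sym addrA -x3.
Qed.

Lemma d0 : d 0 = 0.
Proof. by have := dXYX 0 0; rewrite !mulr0 !mul0r !addr0. Qed.

Lemma d1 : d 1 = 0.
Proof. by apply: eq0_of_eq_add3; have := dXYX 1 1; rewrite !mulr1 !mul1r. Qed.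

Lemma prime_annihL (p a : R) : p != 0 -> (forall r, p * r * a = 0) -> a = 0.
Proof. by move=> p0 /prime_ring [p_0|//]; rewrite p_0 eqxx in p0. Qed.

Lemma prime_annihR (p a : R) : p != 0 -> (forall r, a * r * p = 0) -> a = 0.
Proof. by move=> p0 /prime_ring [//|p_0]; rewrite p_0 eqxx in p0. Qed.

(* Polarizing in r and using C = p C q gives (q r p C) t (C q r p) = 0 for all
   t, so for each r one of the two factors vanishes; since a ring is not a
   union of two proper additive subgroups, one of them vanishes for all r. *)
Lemma pq_corner_eq0 (p q c : R) (H : peirce_pair p q) :
  (forall r, q * r * p * (p * c * q) * (q * r * p) = 0) -> p * c * q = 0.
Proof.
have Cq : p * c * q * q = p * c * q by rewrite -mulrA (pair_qq H).
have pC : p * (p * c * q) = p * c * q by rewrite !mulrA (pair_pp H).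
move: (p * c * q) Cq pC => C Cq pC CC0.
have CC0' r : q * r * p * C * q * r * p = 0 by rewrite -(CC0 r) !mulrA.
have polar r s : q * r * p * C * (q * s * p) + q * s * p * C * (q * r * p) = 0.
  have := CC0 (r + s).
  by rewrite mulrDr mulrDl !mulrDl !mulrDr !CC0 add0r addr0 addrC.
have key r t : q * r * p * C * t * (C * (q * r * p)) = 0.
  rewrite -{1}Cq -{2}pC !mulrA.
  by have := polar r (r * p * C * q * t); rewrite !mulrA CC0' !mul0r add0r.
case: (pselect (forall r, q * r * p * C = 0)) => [L0|/existsNP [r1 n1]].
  by apply: (prime_annihL (pair_q_neq0 H)) => r; rewrite -pC mulrA L0.
case: (pselect (forall r, C * (q * r * p) = 0)) => [R0|/existsNP [r2 n2]].
  by apply: (prime_annihR (pair_p_neq0 H)) => r; rewrite -Cq; have := R0 r; rewrite !mulrA.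
have c1 : C * (q * r1 * p) = 0 by case: (prime_ring (key r1)).
have c2 : q * r2 * p * C = 0 by case: (prime_ring (key r2)).
case: (prime_ring (key (r1 + r2))); rewrite mulrDr mulrDl.
  by rewrite mulrDl c2 addr0.
by rewrite mulrDr c1 add0r.
Qed.

Lemma corner_pp_d (p : R) : d p = 0 -> forall z, p * d z * p = d (p * z * p).
Proof. by move=> dp z; rewrite dXYX dp !mul0r !mulr0 add0r addr0. Qed.

Lemma corner_pp_dl (p : R) : d p = 0 -> forall y z, y * p * d z * p = y * d (p * z * p).
Proof. by move=> dp y z; rewrite -(corner_pp_d dp) !mulrA. Qed.

Lemma d_complement0 (p q : R) (H : peirce_pair p q) : d p = 0 -> d q = 0.
Proof.
move=> dp.
have pp : p * d q * p = 0 by rewrite (corner_pp_d dp) (pair_pq H) mul0r d0.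
have qq : q * d q * q = 0.
  apply: eq0_of_eq_add3; have := congr1 (fun z => q * z * q) (dXYX q q).
  by rewrite /=; peirce_simpl H.
have qp : q * d q * p = 0.
  apply: (prime_annihL (pair_p_neq0 H)) => r.
  have E1 := congr1 (fun z => p * z * p) (dXYX (p + p * r * q) 1).
  have E2 := congr1 (fun z => p * z * p) (dXYX (p + p * r * q) q).
  move: E1 E2; rewrite /= d1; peirce_simpl H.
  rewrite ?(corner_pp_dl dp) ?(corner_pp_d dp); peirce_simpl H; rewrite ?dp ?d0.
  by peirce_simpl H => E1; rewrite -E1 addr0 => /esym.
have pq : p * d q * q = 0.
  apply: (prime_annihR (pair_p_neq0 H)) => r.
  have E1 := congr1 (fun z => p * z * p) (dXYX (p + q * r * p) 1).
  have E2 := congr1 (fun z => p * z * p) (dXYX (p + q * r * p) q).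
  move: E1 E2; rewrite /= d1; peirce_simpl H.
  rewrite ?(corner_pp_dl dp) ?(corner_pp_d dp); peirce_simpl H; rewrite ?dp ?d0.
  by peirce_simpl H => E1; rewrite -E1 add0r => /esym.
by rewrite (peirce_decomp H (d q)) pp qq qp pq !addr0.
Qed.

Record killed_pair (p q : R) : Prop := KilledPair {
  kp_peirce :> peirce_pair p q; kp_dp : d p = 0; kp_dq : d q = 0 }.

Lemma killed_pair_sym p q : killed_pair p q -> killed_pair q p.
Proof. by case=> H dp dq; split => //; apply: peirce_pair_sym. Qed.

Lemma d_qrp_offdiag p q (H : killed_pair p q) r :
  d (q * r * p) = p * d (q * r * p) * q + q * d (q * r * p) * p.
Proof.
rewrite {1}(peirce_decomp H (d (q * r * p))) (corner_pp_d (kp_dp H)).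
rewrite (corner_pp_d (kp_dq H)).
by peirce_simpl H; rewrite d0 add0r addr0.
Qed.

Lemma corner_pq_compress p q (H : killed_pair p q) x :
  p * d x * q = p * d (p * x * q) * q.
Proof.
apply/eqP; rewrite -subr_eq0 -mulrBl -mulrBr; apply/eqP.
apply: (pq_corner_eq0 H) => r.
have E1 := congr1 (fun z => q * z * p) (dXYX (q * r * p) x).
have E2 := congr1 (fun z => q * z * p) (dXYX (q * r * p) (p * x * q)).
move: E1 E2; rewrite /= (d_qrp_offdiag H r); peirce_simpl H.
move=> -> /eqP; rewrite (inj_eq (addIr _)) (inj_eq (addrI _)) => /eqP ->.
by rewrite subrr.
Qed.

Lemma corner_pq_d p q (H : killed_pair p q) z : p * d z * q = d (p * z * q).
Proof.
rewrite (corner_pq_compress H); set w := d (p * z * q).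
rewrite [RHS](peirce_decomp H w) /w (corner_pp_d (kp_dp H)) (corner_pp_d (kp_dq H)).
rewrite (corner_pq_compress (killed_pair_sym H) (p * z * q)).
by peirce_simpl H; rewrite !d0; peirce_simpl H.
Qed.

Lemma corner_pq_dl p q (H : killed_pair p q) y z : y * p * d z * q = y * d (p * z * q).
Proof. by rewrite -(corner_pq_d H) !mulrA. Qed.

Lemma d_corner_pp p q (H : killed_pair p q) z : d (p * z * p) = p * d z * p.
Proof. by rewrite (corner_pp_d (kp_dp H)). Qed.

Lemma d_corner_pq p q (H : killed_pair p q) z : d (p * z * q) = p * d z * q.
Proof. by rewrite (corner_pq_d H). Qed.

Ltac corner_fold H := rewrite ?(corner_pp_dl (kp_dp H), corner_pp_d (kp_dp H),
  corner_pq_dl H, corner_pq_d H, corner_pp_dl (kp_dq H), corner_pp_d (kp_dq H),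
  corner_pq_dl (killed_pair_sym H), corner_pq_d (killed_pair_sym H)).
Ltac corner_unfold H := rewrite ?(d_corner_pp H, d_corner_pq H,
  d_corner_pp (killed_pair_sym H), d_corner_pq (killed_pair_sym H)).
Ltac d_consts H := rewrite ?(kp_dp H, kp_dq H, d0, d1).
Ltac corner_simpl H :=
  corner_fold H; peirce_simpl H; d_consts H; peirce_simpl H; corner_unfold H.

Lemma d_p_addpq p q (H : killed_pair p q) b : d (p + p * b * q) = p * d b * q.
Proof. by rewrite [LHS](peirce_decomp H); corner_simpl H. Qed.

Lemma d_q_addpq p q (H : killed_pair p q) b : d (q + p * b * q) = p * d b * q.
Proof. by rewrite [LHS](peirce_decomp H); corner_simpl H. Qed.

Lemma d_1_addpq p q (H : killed_pair p q) b : d (1 + p * b * q) = p * d b * q.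
Proof. by rewrite -(pair_add H) [LHS](peirce_decomp H); corner_simpl H. Qed.

Lemma dM_pp_pq p q (H : killed_pair p q) a b :
  d (p * a * p * b * q) = p * d a * p * b * q + p * a * p * d b * q.
Proof.
have := congr1 (fun z => p * z * q) (dXYX (p + p * b * q) (p * a * p)).
by rewrite /= (d_p_addpq H); corner_unfold H; rewrite (corner_pq_d H); peirce_simpl H.
Qed.

Lemma dM_pq_qp p q (H : killed_pair p q) a b :
  d (p * a * q * b * p) = p * d a * q * b * p + p * a * q * d b * p.
Proof.
have := congr1 (fun z => p * z * p) (dXYX (p + p * a * q) (q * b * p)).
rewrite /= (d_p_addpq H); corner_unfold H.
by rewrite (corner_pp_d (kp_dp H)); peirce_simpl H.
Qed.

Lemma dM_pq_qq p q (H : killed_pair p q) a b :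
  d (p * a * q * b * q) = p * d a * q * b * q + p * a * q * d b * q.
Proof.
have := congr1 (fun z => p * z * q) (dXYX (q + p * a * q) (q * b * q)).
by rewrite /= (d_q_addpq H); corner_unfold H; rewrite (corner_pq_d H); peirce_simpl H.
Qed.

Lemma dM_pp_pp p q (H : killed_pair p q) a b :
  d (p * a * p * b * p) = p * d a * p * b * p + p * a * p * d b * p.
Proof.
apply/eqP; rewrite -subr_eq0; apply/eqP.
apply: (prime_annihR (pair_q_neq0 H)) => c.
have Ea := dM_pp_pq H a (b * p * c); have Eb := dM_pp_pq H (a * p * b) c.
move: Ea Eb; peirce_simpl H; rewrite (corner_pq_dl H); peirce_simpl H.
rewrite (dM_pp_pq H b c) (corner_pp_d (kp_dp H) (a * p * b)); peirce_simpl H.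
move=> -> /eqP; rewrite addrA (inj_eq (addIr _)) => /eqP <-.
by rewrite subrr.
Qed.

Lemma dD_pq p q (H : killed_pair p q) a b :
  d (p * a * q + p * b * q) = p * d a * q + p * d b * q.
Proof.
have := congr1 (fun z => p * z * q) (dXYX (1 + p * a * q) (p + p * b * q)).
rewrite /= (d_1_addpq H) (d_p_addpq H); corner_unfold H; rewrite (corner_pq_d H).
by peirce_simpl H => E; rewrite addrC E addrC.
Qed.

Lemma dD_pp p q (H : killed_pair p q) a b :
  d (p * a * p + p * b * p) = p * d a * p + p * d b * p.
Proof.
apply/eqP; rewrite -subr_eq0; apply/eqP.
apply: (prime_annihR (pair_q_neq0 H)) => c.
have E := dM_pp_pq H (a + b) c; have E2 := dD_pq H (a * p * c) (b * p * c).
move: E E2; peirce_simpl H.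
rewrite (corner_pp_d (kp_dp H) (a + b)) (corner_pq_d H (a * p * c)).
rewrite (corner_pq_d H (b * p * c)); peirce_simpl H.
rewrite (dM_pp_pq H a c) (dM_pp_pq H b c).
move=> -> /eqP; rewrite addrACA (inj_eq (addIr _)) => /eqP ->.
by rewrite subrr.
Qed.

Lemma d_additive p q (H : killed_pair p q) x y : d (x + y) = d x + d y.
Proof.
rewrite [LHS](peirce_decomp H) (peirce_decomp H (d x)) (peirce_decomp H (d y)).
rewrite (corner_pp_d (kp_dp H) (x + y)) (corner_pq_d H (x + y)).
rewrite (corner_pq_d (killed_pair_sym H) (x + y)) (corner_pp_d (kp_dq H) (x + y)).
peirce_simpl H; rewrite (dD_pp H) (dD_pq H) (dD_pq (killed_pair_sym H)).
rewrite (dD_pp (killed_pair_sym H)).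
rewrite (addrACA (p * d x * p)) (addrACA (p * d x * p + _)).
by rewrite (addrACA (p * d x * p + _ + _)).
Qed.

Definition leibniz_at x y := d (x * y) = d x * y + x * d y.

Lemma leibniz_atDl p q (H : killed_pair p q) x1 x2 y :
  leibniz_at x1 y -> leibniz_at x2 y -> leibniz_at (x1 + x2) y.
Proof.
by rewrite /leibniz_at mulrDl !(d_additive H) => -> ->; rewrite ?mulrDl ?mulrDr addrACA.
Qed.

Lemma leibniz_atDr p q (H : killed_pair p q) x y1 y2 :
  leibniz_at x y1 -> leibniz_at x y2 -> leibniz_at x (y1 + y2).
Proof.
by rewrite /leibniz_at mulrDr !(d_additive H) => -> ->; rewrite ?mulrDl ?mulrDr addrACA.
Qed.

Lemma leibniz_at_corner p q (H : killed_pair p q) x y :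
  leibniz_at (p * x * p) y /\ leibniz_at (p * x * q) y.
Proof.
split; rewrite (peirce_decomp H y);
  repeat apply: (leibniz_atDr H); rewrite /leibniz_at; peirce_simpl H;
  corner_unfold H; peirce_simpl H; d_consts H; peirce_simpl H;
  rewrite ?(dM_pp_pp H, dM_pp_pq H, dM_pq_qp H, dM_pq_qq H,
    dM_pp_pp (killed_pair_sym H), dM_pp_pq (killed_pair_sym H),
    dM_pq_qp (killed_pair_sym H), dM_pq_qq (killed_pair_sym H)) //.
Qed.

Lemma killed_pair_leibniz p q (H : killed_pair p q) : leibniz d.
Proof.
move=> x y; rewrite -/(leibniz_at x y) (peirce_decomp H x).
have [pp pq] := leibniz_at_corner H x y.
have [qq qp] := leibniz_at_corner (killed_pair_sym H) x y.
by repeat apply: (leibniz_atDl H).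
Qed.

End TripleDerivation.

Theorem triple_leibniz_derivation (R : pzRingType) (d : R -> R) (e : R) :
  (forall x : R, x + x = 0 -> x = 0) ->
  (forall a b : R, (forall r, a * r * b = 0) -> a = 0 \/ b = 0) ->
  e * e = e -> e != 0 -> e != 1 -> triple_leibniz d ->
  (forall x y, d (x + y) = d x + d y) /\ leibniz d.
Proof.
move=> two_tf prime ee e0 e1 dT.
move: (1 - e) (peirce_pair_idem ee e0 e1) => q H.
have pdp : e * d e * e = 0.
  apply: (eq0_of_eq_add3 two_tf).
  by have := congr1 (fun z => e * z * e) (dT e e) => /=; peirce_simpl H.
have qdq : q * d e * q = 0.
  by have := congr1 (fun z => q * z * q) (dT e e) => /=; peirce_simpl H.
(* c is chosen so that the inner derivation ad c agrees with d at e. *)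
pose c := q * d e * e - e * d e * q.
have d'T : triple_leibniz (d \- ad c).
  by apply: triple_leibnizB => //; apply/leibniz_triple/leibniz_ad.
have d'e : (d \- ad c) e = 0.
  rewrite /= /ad /c; peirce_simpl H; rewrite {1}(peirce_decomp H (d e)) pdp qdq add0r addr0.
  by rewrite [X in _ - X]addrC subrr.
have K : killed_pair (d \- ad c) e q.
  by split => //; apply: (d_complement0 two_tf prime d'T H d'e).
have dE : d = (d \- ad c) \+ ad c by apply/funext => z /=; rewrite subrK.
have dA := d_additive prime d'T K; have dM := killed_pair_leibniz prime d'T K.
rewrite dE; move: (d \- ad c) dA dM => d' dA dM.
split=> [x y|]; last exact: leibnizD dM (leibniz_ad c).
by rewrite /= dA ad_additive addrACA.
Qed.

Definition banach_ring (R : realType) (X : completeNormedModType R) (A : banach_alg X)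
  : Type := X.
Arguments banach_ring {R X} A.

HB.instance Definition _ (R : realType) (X : completeNormedModType R) (A : banach_alg X) :=
  GRing.Zmodule.on (banach_ring A).

Section BanachRing.
Variables (R : realType) (X : completeNormedModType R) (A : banach_alg X).

Local Notation mul := (bmul A : banach_ring A -> banach_ring A -> banach_ring A).

Lemma banach_mulA : associative mul.
Proof. by move=> x y z; rewrite bmulA. Qed.

Lemma banach_mulDl : left_distributive mul +%R.
Proof. by move=> x y z; rewrite bmulDl. Qed.

Lemma banach_mulDr : right_distributive mul +%R.
Proof. by move=> x y z; rewrite bmulDr. Qed.

End BanachRing.

HB.instance Definition _ (R : realType) (X : completeNormedModType R) (A : banach_alg X) :=
  GRing.Zmodule_isPzRing.Build (banach_ring A) (@banach_mulA R X A) (bmul1x A) (bmulx1 A)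
    (@banach_mulDl R X A) (@banach_mulDr R X A).

Lemma double_eq0 (R : numFieldType) (V : lmodType R) (x : V) : x + x = 0 -> x = 0.
Proof.
move=> xx0; have : 2%:R *: x = 0 by rewrite scaler_nat mulr2n.
by move/eqP; rewrite scaler_eq0 pnatr_eq0 /= => /eqP.
Qed.

Lemma limn_einf0_lt (R : realType) (v : nat -> R) :
  limn_einf (fun k => (v k)%:E) = 0%E ->
  forall N eps, 0 < eps -> exists2 k, (N <= k)%N & v k < eps.
Proof.
move=> v0 N eps eps0.
have : (einfs (fun k => (v k)%:E) N <= 0)%E.
  rewrite -v0 limn_einf_lim.
  have := @cvg_einfs_sup R (fun k => (v k)%:E); move/cvg_lim => -> //.
  by apply: ereal_sup_ubound; exists N.
move=> /le_lt_trans /(_ (_ : 0 < eps%:E)%E); rewrite lte_fin => /(_ eps0).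
by move=> /ereal_inf_lt [_ [k /= Nk <-]]; rewrite lte_fin => vk; exists k.
Qed.

Lemma cvg_eq0_liminf_bound (R : realType) (V : normedModType R) (u : nat -> V) (l : V)
  (v : nat -> R) :
  u @ \oo --> l -> (forall k, `|u k| <= v k) ->
  limn_einf (fun k => (v k)%:E) = 0%E -> l = 0.
Proof.
move=> ul uv v0; apply/eqP; rewrite -normr_eq0 eq_le normr_ge0 andbT.
apply/ler_addgt0Pr => eps eps0; rewrite add0r.
have eps20 : 0 < eps / 2 by rewrite divr_gt0.
have [N _ HN] := (cvgrPdist_lt _ _).1 ul _ eps20.
have [k Nk vk] := limn_einf0_lt v0 N eps20.
rewrite -(subrK (u k) l) (le_trans (ler_normD _ _)) // [eps]splitr lerD // ltW //.
  exact: HN.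
exact: le_lt_trans (uv k) vk.
Qed.

Lemma cvgn_mul_index (R : numFieldType) (V : normedModType R) (u : nat -> V) (l : V)
  (c : nat) : (0 < c)%N -> u @ \oo --> l -> (fun k => u (c * k)%N) @ \oo --> l.
Proof.
move=> c0 ul; apply/cvgrPdist_lt => e e0.
have [N _ HN] := (cvgrPdist_lt _ _).1 ul e e0.
by exists N => // k /= Nk; apply: HN; rewrite /= (leq_trans Nk) // leq_pmull.
Qed.

Lemma cvg_lipschitz_map (R : numFieldType) (V W : normedModType R) (f : V -> W) (k : R) :
  0 <= k -> (forall x y, `|f x - f y| <= k * `|x - y|) ->
  forall (u : nat -> V) l, u @ \oo --> l -> (fun n => f (u n)) @ \oo --> f l.
Proof.
move=> k0 fk u l ul; apply/cvgrPdist_lt => e e0.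
have k1 : 0 < k + 1 by rewrite ltr_wpDl.
near=> n.
have : `|l - u n| < e / (k + 1).
  by near: n; exact: (cvgrPdist_lt _ _).1 ul _ (divr_gt0 e0 k1).
rewrite ltr_pdivlMr // => lu; apply: le_lt_trans (fk _ _) _; apply: le_lt_trans lu.
by rewrite mulrC ler_wpM2l // lerDl.
Unshelve. all: by end_near. Qed.

Section BanachAlgebraLemmas.
Variables (R : realType) (X : completeNormedModType R) (A : banach_alg X).
Local Notation "x ** y" := (bmul A x y) (at level 40, left associativity).

Lemma bmulBl (x y z : X) : (x - y) ** z = x ** z - y ** z.
Proof. by rewrite bmulDl -scaleN1r bmulZl scaleN1r. Qed.

Lemma bmulBr (x y z : X) : z ** (x - y) = z ** x - z ** y.
Proof. by rewrite bmulDr -scaleN1r bmulZr scaleN1r. Qed.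

Lemma cvg_bmulr (u : nat -> X) l c : u @ \oo --> l -> (fun n => u n ** c) @ \oo --> l ** c.
Proof.
apply: (cvg_lipschitz_map (f := bmul A ^~ c) (normr_ge0 c)) => x y /=.
by rewrite -bmulBl mulrC bnormM_le.
Qed.

Lemma cvg_bmull (u : nat -> X) l c : u @ \oo --> l -> (fun n => c ** u n) @ \oo --> c ** l.
Proof.
apply: (cvg_lipschitz_map (f := bmul A c) (normr_ge0 c)) => x y.
by rewrite -bmulBr bnormM_le.
Qed.

End BanachAlgebraLemmas.

Section HyersLimit.
Variables (R : realType) (X : completeNormedModType R) (A : banach_alg X) (h : X -> X).
Variables (phi : X -> X -> R) (m : int).
Hypothesis h_odd : odd_map h.
Hypothesis m_neq0 : m != 0.
Hypothesis phi_ge0 : forall x y, 0 <= phi x y.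
Hypothesis h_quadratic : forall x y : X,
  `|h (x + y *~ m) + h (x - y *~ m) - h x *+ 2 + h y *~ (2 * m ^+ 2)
     - h (y *+ 2) *~ (m ^+ 2)| <= phi x y.
Hypothesis phi_series : forall x : X,
  (\sum_(0 <= k <oo) ((2 ^- k * phi 0 ((2 ^+ k : R) *: x))%:E) < +oo)%E.

Lemma h0 : h 0 = 0.
Proof. by apply: double_eq0; have := h_odd 0; rewrite oppr0 => {1}->; rewrite addNr. Qed.

Lemma h_double_bound w : `|h (w *+ 2) - h w *+ 2| <= phi 0 w.
Proof.
have := h_quadratic 0 w; rewrite add0r sub0r h_odd addrN h0 mul0rn subr0 add0r.
rewrite mulrzA -mulrzBl -scaler_int normrZ; apply: le_trans.
rewrite distrC -[X in X <= _]mul1r ler_wpM2r // (le_trans _ (ler_norm _)) //.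
by rewrite ler1z; lia.
Qed.

Definition hyers_seq n (z : X) : X := (2 ^- n : R) *: h ((2 ^+ n : R) *: z).

Lemma hyers_seq_step n z :
  `|hyers_seq n.+1 z - hyers_seq n z| <= 2 ^- n * phi 0 ((2 ^+ n : R) *: z).
Proof.
rewrite /hyers_seq; set w := (2 ^+ n : R) *: z.
have -> : (2 ^+ n.+1 : R) *: z = w *+ 2 by rewrite exprS -scalerA -scaler_nat.
have e : (2 ^- n : R) = 2 ^- n.+1 * 2.
  by rewrite exprS invfM mulrAC mulVf ?mul1r // pnatr_eq0.
rewrite {1}e -scalerA scaler_nat -scalerBr normrZ ger0_norm ?invr_ge0 ?exprn_ge0 //.
rewrite e -mulrA ler_wpM2l ?invr_ge0 ?exprn_ge0 //.
by rewrite (le_trans (h_double_bound w)) // ler_peMl // ler1n.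
Qed.

Lemma hyers_seq_cvg z : cvgn (hyers_seq ^~ z).
Proof.
pose u k := 2 ^- k * phi 0 ((2 ^+ k : R) *: z).
have u0 k : 0 <= u k by rewrite mulr_ge0 // invr_ge0 exprn_ge0.
pose b k := hyers_seq k.+1 z - hyers_seq k z.
have cu : cvgn (series u) := nnseries_is_cvg u0 (phi_series z).
have cb : cvgn (series b).
  apply: normed_cvg.
  exact: series_le_cvg (fun n => normr_ge0 _) u0 (fun n => hyers_seq_step n z) cu.
have -> : hyers_seq ^~ z = (fun n => hyers_seq 0 z + series b n).
  by apply/funext => n; rewrite /series /= telescope_sumr // addrC subrK.
exact: is_cvgD (is_cvg_cst _) cb.
Qed.

Definition hyers_lim (z : X) : X := limn (hyers_seq ^~ z).

Lemma cvg_hyers_lim z : hyers_seq ^~ z @ \oo --> hyers_lim z.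
Proof. exact: hyers_seq_cvg z. Qed.

Local Notation "x ** y" := (bmul A x y) (at level 40, left associativity).

Definition triple_defect (f : X -> X) x y :=
  f (x ** y ** x) - f x ** y ** x - x ** f y ** x - x ** y ** f x.

Variable psi : X -> X -> R.
Hypothesis h_triple_approx : forall x y, `|triple_defect h x y| <= psi x y.
Hypothesis psi_liminf3 : forall x y : X,
  limn_einf (fun k =>
    ((2 ^- (3 * k)%N) * psi ((2 ^+ k : R) *: x) ((2 ^+ k : R) *: y))%:E) = 0%E.
Hypothesis psi_liminf2 : forall x y : X,
  limn_einf (fun k => ((2 ^- (2 * k)%N) * psi ((2 ^+ k : R) *: x) y)%:E) = 0%E.

Lemma triple_defect_scale3 x y k :
  (2 ^- (3 * k)%N : R) *: triple_defect h ((2 ^+ k : R) *: x) ((2 ^+ k : R) *: y)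
  = hyers_seq (3 * k)%N (x ** y ** x) - hyers_seq k x ** y ** x
     - x ** hyers_seq k y ** x - x ** y ** hyers_seq k x.
Proof.
rewrite /triple_defect /hyers_seq !(bmulZl, bmulZr) !scalerBr !scalerA.
set c := (2 ^+ k : R); have c0 : c != 0 by rewrite expf_neq0 // pnatr_eq0.
have -> : (2 ^+ (3 * k) : R) = c * (c * c) by rewrite /c -!exprD; congr (_ ^+ _); lia.
congr (_ - _ - _ - _); first by rewrite mulrA.
all: by congr (_ *: _); field.
Qed.

Lemma triple_defect_scale2 x y k :
  (2 ^- (2 * k)%N : R) *: triple_defect h ((2 ^+ k : R) *: x) y
  = hyers_seq (2 * k)%N (x ** y ** x) - hyers_seq k x ** y ** x
     - x ** h y ** x - x ** y ** hyers_seq k x.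
Proof.
rewrite /triple_defect /hyers_seq !(bmulZl, bmulZr) !scalerBr !scalerA.
set c := (2 ^+ k : R); have c0 : c != 0 by rewrite expf_neq0 // pnatr_eq0.
have -> : (2 ^+ (2 * k) : R) = c * c by rewrite /c -!exprD; congr (_ ^+ _); lia.
congr (_ - _ - _ - _); last 2 first; [by rewrite mulVf ?scale1r ?mulf_neq0| |].
all: by congr (_ *: _); field.
Qed.

Lemma hyers_lim_triple x y : triple_defect hyers_lim x y = 0.
Proof.
apply: (cvg_eq0_liminf_bound (u := fun k => hyers_seq (3 * k)%N (x ** y ** x)
  - hyers_seq k x ** y ** x - x ** hyers_seq k y ** x - x ** y ** hyers_seq k x)
  _ _ (psi_liminf3 x y)).
- apply: cvgB; [apply: cvgB; [apply: cvgB|]|].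
  + exact: (cvgn_mul_index (c := 3) isT (@cvg_hyers_lim _)).
  + by do 2 apply: cvg_bmulr; exact: cvg_hyers_lim.
  + by apply: cvg_bmulr; apply: cvg_bmull; exact: cvg_hyers_lim.
  + by apply: cvg_bmull; exact: cvg_hyers_lim.
- move=> k; rewrite -triple_defect_scale3 normrZ ger0_norm ?invr_ge0 ?exprn_ge0 //.
  by rewrite ler_wpM2l ?invr_ge0 ?exprn_ge0.
Qed.

Lemma hyers_lim_triple_mixed x y :
  hyers_lim (x ** y ** x) - hyers_lim x ** y ** x - x ** h y ** x
  - x ** y ** hyers_lim x = 0.
Proof.
apply: (cvg_eq0_liminf_bound (u := fun k => hyers_seq (2 * k)%N (x ** y ** x)
  - hyers_seq k x ** y ** x - x ** h y ** x - x ** y ** hyers_seq k x)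
  _ _ (psi_liminf2 x y)).
- apply: cvgB; [apply: cvgB; [apply: cvgB|]|].
  + exact: (cvgn_mul_index (c := 2) isT (@cvg_hyers_lim _)).
  + by do 2 apply: cvg_bmulr; exact: cvg_hyers_lim.
  + exact: cvg_cst.
  + by apply: cvg_bmull; exact: cvg_hyers_lim.
- move=> k; rewrite -triple_defect_scale2 normrZ ger0_norm ?invr_ge0 ?exprn_ge0 //.
  by rewrite ler_wpM2l ?invr_ge0 ?exprn_ge0.
Qed.

Lemma h_eq_hyers_lim y : h y = hyers_lim y.
Proof.
have E1 := hyers_lim_triple (bone A) y; have E2 := hyers_lim_triple_mixed (bone A) y.
rewrite /triple_defect !bmul1x !bmulx1 in E1 E2.
apply: oppr_inj; apply: (addrI (hyers_lim y - hyers_lim (bone A) ** y)).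
by apply: (addIr (- (y ** hyers_lim (bone A)))); rewrite E2 E1.
Qed.

Lemma h_triple_leibniz : triple_leibniz (h : banach_ring A -> banach_ring A).
Proof.
move=> x y; apply/eqP; rewrite -subr_eq0 !opprD !addrA; apply/eqP.
have := hyers_lim_triple x y; rewrite /triple_defect -!h_eq_hyers_lim; exact.
Qed.

End HyersLimit.

Theorem theorem3p1 (R : realType) (X : completeNormedModType R)
  (A : banach_alg X) (h : X -> X) (phi psi : X -> X -> R) (m : int) :
  prime_alg A ->
  has_nontrivial_idempotent A ->
  odd_map h ->
  (forall x y, 0 <= phi x y) ->
  (forall x y, 0 <= psi x y) ->
  m != 0 -> (2 %| m)%Z ->
  (forall x y : X,
     `|h (bmul A (bmul A x y) x) - bmul A (bmul A (h x) y) x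
       - bmul A (bmul A x (h y)) x - bmul A (bmul A x y) (h x)| <= psi x y) ->
  (forall x y : X,
     `|h (x + y *~ m) + h (x - y *~ m) - h x *+ 2 + h y *~ (2 * m ^+ 2)
        - h (y *+ 2) *~ (m ^+ 2)| <= phi x y) ->
  (forall x : X,
     (\sum_(0 <= k <oo) ((2 ^- k * phi 0 ((2 ^+ k : R) *: x))%:E) < +oo)%E) ->
  (forall x y : X,
     limn_einf (fun k => ((2 ^- (3 * k)%N)
                 * psi ((2 ^+ k : R) *: x) ((2 ^+ k : R) *: y))%:E) = 0%E) ->
  (forall x y : X,
     limn_einf (fun k => ((2 ^- (2 * k)%N)
                 * psi ((2 ^+ k : R) *: x) y)%:E) = 0%E) ->
  derivation A h.
Proof.
move=> [_ prime] [e [ee [e0 e1]]] h_odd phi_ge0 _ m0 _ Hpsi Hphi Hsum Hl3 Hl2.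
have hT := h_triple_leibniz h_odd m0 phi_ge0 Hphi Hsum Hpsi Hl3 Hl2.
have two_tf : forall x : banach_ring A, x + x = 0 -> x = 0 by exact: double_eq0.
have [hD hM] := triple_leibniz_derivation two_tf prime ee e0 e1 hT.
by split.
Qed.
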